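(* Let $H$ be an $n\times(n-1)$ unreduced upper Hessenberg $0/1$-matrix whose columns together with the origin form an acute $(n-1)$-simplex in $[0,1]^n$. Then there exist at most two $(n+1)\times n$ unreduced upper Hessenberg $0/1$-matrices whose columns together with the origin form an acute $n$-simplex in $[0,1]^{n+1}$ and whose top left $n\times(n-1)$ submatrix equals $H$.
   Context: An $m\times p$ matrix $A=(a_{ij})$ is unreduced upper Hessenberg if $a_{ij}=0$ whenever $i>j+1$ and $a_{j+1,j}\neq0$ for all $j$. The columns $p_1,\dots,p_j$ of a $0/1$-matrix $P$ together with the origin form an acute $j$-simplex if $G=P^\top P$ is invertible, every off-diagonal entry of $G^{-1}$ is negative and every row sum of $G^{-1}$ is positive (equivalently, all dihedral angles of the simplex are acute). *)

From mathcomp Require Import all_boot all_order all_algebra.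
Set Implicit Arguments. Unset Strict Implicit. Unset Printing Implicit Defensive.
Import Order.TTheory GRing.Theory Num.Theory.
Local Open Scope ring_scope.

Definition zero_one_mx (m p : nat) (A : 'M[rat]_(m, p)) : Prop :=
  forall i j, A i j = 0 \/ A i j = 1.

Definition unreduced_hessenberg (m p : nat) (A : 'M[rat]_(m, p)) : Prop :=
  (forall (i : 'I_m) (j : 'I_p), (j.+1 < i)%N -> A i j = 0) /\
  (forall (i : 'I_m) (j : 'I_p), nat_of_ord i = j.+1 -> A i j != 0).

(* The columns of P together with the origin form an acute simplex:
   G = P^T P is invertible, off-diagonal entries of G^{-1} are negative,
   and row sums of G^{-1} are positive. *)
Definition acute_simplex (m p : nat) (P : 'M[rat]_(m, p)) : Prop :=
  let G := P^T *m P in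
  G \in unitmx /\
  (forall i j : 'I_p, i != j -> invmx G i j < 0) /\
  (forall i : 'I_p, 0 < \sum_(j < p) invmx G i j).

Definition topleft (m p : nat) (A : 'M[rat]_(m.+1, p.+1)) : 'M[rat]_(m, p) :=
  \matrix_(i < m, j < p) A (widen_ord (leqnSn m) i) (widen_ord (leqnSn p) j).

Definition good_ext (k : nat) (H : 'M[rat]_(k.+1, k)) (A : 'M[rat]_(k.+2, k.+1)) : Prop :=
  unreduced_hessenberg A /\ zero_one_mx A /\ acute_simplex A /\ topleft A = H.

(* Let u be the normal of the span of the columns of H, given by the Hessenberg recurrence
   u_0 = 1, u_(j+1) = - sum_(l <= j) h_(l,j) u_l.  In an acute simplex every vertex
   projects orthogonally into the interior of the opposite facet.  Read off the inverse
   Gram matrix, this applies to the new column v of an extension and, since the leading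
   blocks of H stay acute (Schur complement), to every column of H within its leading
   block.  On the first j+1 coordinates the projection condition forces v_j to be 0 or 1
   according to the sign of u_j <u, v>, and an induction on j shows that a 0/1 vector
   meeting all these conditions is determined by the sign of <u, v>.  Two signs leave room
   for at most two extensions. *)

From mathcomp Require Import all_boot all_order all_algebra.
From mathcomp Require Import ring lra.
Set Implicit Arguments. Unset Strict Implicit. Unset Printing Implicit Defensive.
Import Order.TTheory GRing.Theory Num.Theory.
Local Open Scope ring_scope.

Lemma sum_ord_tail0 (V : nmodType) (F : nat -> V) n M : (n <= M)%N ->
  (forall i, (n <= i < M)%N -> F i = 0) -> \sum_(i < M) F i = \sum_(i < n) F i.
Proof.
move=> nM F0; rewrite -!(big_mkord xpredT) (big_cat_nat (leq0n n) nM) /=.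
rewrite [X in _ + X]big1_seq ?addr0 // => i /andP[_]; rewrite mem_index_iota; exact: F0.
Qed.

Lemma leq_down_ind (P : nat -> Prop) K : P K ->
  (forall m, (m < K)%N -> P m.+1 -> P m) -> forall m, (m <= K)%N -> P m.
Proof.
move=> PK step; suff down d : (d <= K)%N -> P (K - d)%N.
  by move=> m mK; rewrite -(subKn mK); apply: down; rewrite leq_subr.
elim: d => [|d IH] dK; first by rewrite subn0.
apply: step; first by rewrite ltn_subrL (leq_trans _ dK).
by rewrite subnSK //; apply: IH; exact: ltnW.
Qed.

Section HessenbergNormal.
Variable R : comPzRingType.
Implicit Types (h : nat -> nat -> R) (w : nat -> R).

Definition hessenberg_fun h := forall r j, (j.+1 < r)%N -> h r j = 0.
Definition unit_subdiag h k := forall j, (j < k)%N -> h j.+1 j = 1.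

Fixpoint normal_upto h n : nat -> R :=
  match n with
  | 0 => fun i => (i == 0%N)%:R
  | n'.+1 => fun i => if i == n'.+1 then - \sum_(l < n'.+1) h l n' * normal_upto h n' l
                      else normal_upto h n' i
  end.
Definition normal h i := normal_upto h i i.

Lemma normal_uptoE h n i : (i <= n)%N -> normal_upto h n i = normal h i.
Proof.
elim: n => [|n IH] le_in; first by rewrite leqn0 in le_in; rewrite (eqP le_in).
rewrite /=; case: eqP => [->|/eqP ne]; first by rewrite /normal /= eqxx.
by apply: IH; rewrite -ltnS ltn_neqAle ne le_in.
Qed.

Lemma normal0 h : normal h 0 = 1. Proof. by []. Qed.

Lemma normalS h j : normal h j.+1 = - \sum_(l < j.+1) h l j * normal h l.
Proof.
rewrite /normal /= eqxx; congr (- _); apply: eq_bigr => l _.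
by rewrite normal_uptoE // -ltnS.
Qed.

Lemma normal_orth_cols h m i : hessenberg_fun h -> unit_subdiag h m -> (i < m)%N ->
  \sum_(r < m.+1) h r i * normal h r = 0.
Proof.
move=> hh s1 im; rewrite (@sum_ord_tail0 _ (fun r => h r i * normal h r) i.+2) //.
  by rewrite big_ord_recr /= s1 // mul1r normalS addrC addNr.
by move=> r /andP[ir _]; rewrite hh // mul0r.
Qed.

Lemma orth_cols_normal h m w : hessenberg_fun h -> unit_subdiag h m ->
  (forall j, (j < m)%N -> \sum_(r < m.+1) h r j * w r = 0) ->
  forall r, (r <= m)%N -> w r = w 0%N * normal h r.
Proof.
move=> hh s1 orth; elim/ltn_ind=> -[_ _|r IH rm]; first by rewrite normal0 mulr1.
have := orth r rm; rewrite (@sum_ord_tail0 _ (fun i => h i r * w i) r.+2) //; last first.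
  by move=> i /andP[ri _]; rewrite hh // mul0r.
rewrite big_ord_recr /= s1 // mul1r => /eqP; rewrite addrC addr_eq0 => /eqP ->.
rewrite normalS mulrN mulr_sumr; congr (- _); apply: eq_bigr => i _.
by rewrite IH 1?mulrCA // ?(leq_trans _ (ltnW rm)) // -ltnS.
Qed.

End HessenbergNormal.

Section FacetProjection.
Variable R : realFieldType.
Implicit Types (h : nat -> nat -> R) (v : nat -> R).

Definition dot_normal h m v := \sum_(i < m.+1) normal h i * v i.

(* The orthogonal projection of (v_0, ..., v_m) onto the span of the columns
   h_0, ..., h_(m-1) lies in the interior of the simplex with vertices
   0, h_0, ..., h_(m-1). *)
Definition projects_into_facet h m v := exists x : nat -> R,
  [/\ forall i, (i < m)%N -> 0 < x i, \sum_(i < m) x i < 1 &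
  forall j, (j < m)%N -> \sum_(r < m.+1) h r j * (v r - \sum_(i < m) h r i * x i) = 0].

Definition entry_sign_rule h j v :=
  (v j = 0 -> normal h j * dot_normal h j v < 0) /\
  (v j = 1 -> 0 < normal h j * dot_normal h j v).

Lemma projects_into_facet_ext h h' m v v' :
  (forall r i, (r <= m)%N -> (i < m)%N -> h r i = h' r i) ->
  (forall r, (r <= m)%N -> v r = v' r) ->
  projects_into_facet h m v -> projects_into_facet h' m v'.
Proof.
move=> Eh Ev [x [xpos xsum orth]]; exists x; split=> // j jm.
rewrite -[RHS](orth j jm); apply: eq_bigr => r _; have rm : (r <= m)%N := ltn_ord r.
by rewrite Eh // Ev //; congr (_ * (_ - _)); apply: eq_bigr => i _; rewrite Eh.
Qed.

Lemma projects_into_facet_sign h m v : hessenberg_fun h -> unit_subdiag h m.+1 ->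
  projects_into_facet h m.+1 v -> entry_sign_rule h m.+1 v.
Proof.
move=> hh s1 [x [xpos xsum orth]].
pose w r := v r - \sum_(i < m.+1) h r i * x i.
have w_normal : forall r, (r <= m.+1)%N -> w r = w 0%N * normal h r.
  by apply: orth_cols_normal hh s1 _ => j /orth.
have dotE : dot_normal h m.+1 v = w 0%N * \sum_(i < m.+2) normal h i ^+ 2.
  have -> : dot_normal h m.+1 v = \sum_(i < m.+1) x i * \sum_(r < m.+2) h r i * normal h r
      + \sum_(r < m.+2) normal h r * w r.
    rewrite /dot_normal (eq_bigr (fun r : 'I_m.+2 =>
      normal h r * (\sum_(i < m.+1) h r i * x i + w r))); last first.
      by move=> r _; rewrite /w addrC subrK.
    under eq_bigr do rewrite mulrDr; rewrite big_split /=; congr (_ + _).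
    under eq_bigr do rewrite mulr_sumr; rewrite exchange_big; apply: eq_bigr => i _ /=.
    by rewrite mulr_sumr; apply: eq_bigr => r _; ring.
  rewrite big1 ?add0r => [|i _]; last by rewrite normal_orth_cols ?mulr0.
  rewrite mulr_sumr; apply: eq_bigr => r _.
  by rewrite (w_normal r (ltn_ord r)) mulrCA expr2 mulrA.
have norm_gt0 : 0 < \sum_(i < m.+2) normal h i ^+ 2.
  by rewrite big_ord_recl normal0 expr1n ltr_pwDl // sumr_ge0 // => i _; exact: sqr_ge0.
have vE : v m.+1 = x m + w 0%N * normal h m.+1.
  rewrite -(w_normal _ (leqnn _)) /w big_ord_recr /= s1 // mul1r big1 => [|i _].
    by rewrite add0r addrC subrK.
  by rewrite hh ?mul0r //= ltnS ltn_ord.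
have xm_gt0 : 0 < x m by exact: xpos.
have xm_lt1 : x m < 1.
  apply: le_lt_trans xsum; rewrite (bigD1 (Ordinal (ltnSn m))) //= lerDl.
  by rewrite sumr_ge0 // => i _; exact: ltW (xpos _ _).
rewrite /entry_sign_rule dotE mulrA (mulrC (normal h _)); split => vm.
  have -> : w 0%N * normal h m.+1 = - x m by rewrite -[LHS](addKr (x m)) -vE vm addr0.
  by rewrite pmulr_llt0 // oppr_lt0.
have -> : w 0%N * normal h m.+1 = 1 - x m by rewrite -vm vE addrC addKr.
by rewrite pmulr_lgt0 // subr_gt0.
Qed.

Lemma projects_into_facet_restrict h m v : hessenberg_fun h ->
  projects_into_facet h m.+1 v -> projects_into_facet h m (fun r => h r m) ->
  projects_into_facet h m v.
Proof.
move=> hh [x [xpos xsum xorth]] [y [ypos ysum yorth]].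
have xm_gt0 : 0 < x m by exact: xpos.
exists (fun i => x i + x m * y i); split.
- by move=> i im; rewrite addr_gt0 ?mulr_gt0 ?xpos ?ypos // leqW.
- rewrite big_split /= -mulr_sumr; apply: lt_trans xsum.
  by rewrite big_ord_recr /= ltrD2l -[X in _ < X]mulr1 ltr_pM2l.
move=> j jm; have yE := yorth j jm.
have := xorth j (leqW jm); rewrite big_ord_recr /= (hh m.+1 j) // mul0r addr0 => xE.
transitivity (\sum_(r < m.+1) h r j * (v r - \sum_(i < m.+1) h r i * x i)
  + x m * \sum_(r < m.+1) h r j * (h r m - \sum_(i < m) h r i * y i));
  last by rewrite xE yE mulr0 addr0.
rewrite mulr_sumr -big_split; apply: eq_bigr => r _ /=.
under eq_bigr do rewrite mulrDr mulrCA.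
rewrite big_split -mulr_sumr big_ord_recr /=; ring.
Qed.

Lemma projects_into_facet_le h M v : hessenberg_fun h ->
  (forall m, (m < M)%N -> projects_into_facet h m (fun r => h r m)) ->
  projects_into_facet h M v -> forall m, (m <= M)%N -> projects_into_facet h m v.
Proof.
move=> hh cols vM; apply: leq_down_ind => // m mM vSm.
exact: projects_into_facet_restrict hh vSm (cols m mM).
Qed.

(* Read s as <u, v> on the first m+1 coordinates, U as u_(m+1) and b as v_(m+1); the last
   hypothesis is the induction hypothesis, column m having <u, col m> = -U. *)
Lemma next_entry_sign (U s b : R) : b = 0 \/ b = 1 ->
  (b = 0 -> U * s < 0) -> (b = 1 -> 0 < U * (s + U)) ->
  ((0 < s) = (0 < - U) -> s = - U) ->
  b = ((0 < s) != (0 < - U))%:R /\ (0 < s + U * b) = (0 < s).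
Proof.
move=> b01 b0 b1 same; case: b01 b0 b1 => -> b0 b1; rewrite ?mulr0 ?addr0 ?mulr1.
  split=> //; have := b0 erefl.
  by case: (ltrP 0 s) => s0; case: (ltrP 0 (- U)) => U0 //= _; exfalso; nra.
have {}b1 := b1 erefl.
have /negPf-> : (0 < s) != (0 < - U).
  by apply/negP => /eqP/same sU; move: b1; rewrite sU addNr mulr0 ltxx.
split=> //; case: (ltrP 0 s) => s0; case: (ltrP 0 (- U)) => U0 //=.
all: by [nra | apply/negbTE; rewrite -leNgt; nra].
Qed.

Definition sign_compatible h m v :=
  (forall r, (r <= m)%N -> v r = 0 \/ v r = 1) /\
  (forall j, (0 < j <= m)%N -> entry_sign_rule h j v).

Lemma sign_compatibleW h m v : sign_compatible h m.+1 v -> sign_compatible h m v.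
Proof.
case=> zo rule; split=> [r /leqW/zo|j /andP[j0 /leqW jm]] //.
by apply: rule; rewrite j0.
Qed.

Lemma projects_into_facet_sign_compatible h M v : hessenberg_fun h -> unit_subdiag h M ->
  (forall m, (m < M)%N -> projects_into_facet h m (fun r => h r m)) ->
  (forall r, (r <= M)%N -> v r = 0 \/ v r = 1) -> projects_into_facet h M v ->
  sign_compatible h M v.
Proof.
move=> hh s1 cols zo vM; split=> // -[//|j] /= jM.
apply: projects_into_facet_sign hh _ (projects_into_facet_le hh cols vM jM).
by move=> i ij; apply: s1; apply: leq_trans jM.
Qed.

Lemma dot_normalS h m v : dot_normal h m.+1 v = dot_normal h m v + normal h m.+1 * v m.+1.
Proof. exact: big_ord_recr. Qed.

Lemma dot_normal_col h m : dot_normal h m (fun r => h r m) = - normal h m.+1.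
Proof. by rewrite normalS opprK; apply: eq_bigr => i _; rewrite mulrC. Qed.

Lemma eq_dot_normal h m v v' : (forall r, (r <= m)%N -> v r = v' r) ->
  dot_normal h m v = dot_normal h m v'.
Proof. by move=> E; apply: eq_bigr => i _; rewrite E // -ltnS. Qed.

Lemma sign_compatible_unique h K :
  (forall m, (m < K)%N -> sign_compatible h m (fun r => h r m)) ->
  forall m, (m <= K)%N -> forall v v', sign_compatible h m v -> sign_compatible h m v' ->
  (0 < dot_normal h m v) = (0 < dot_normal h m v') -> forall r, (r <= m)%N -> v r = v' r.
Proof.
move=> cols; elim=> [|m IH] mK v v' cv cv' same r.
  rewrite leqn0 => /eqP->; move: same; rewrite /dot_normal !big_ord1 normal0 !mul1r.
  by case: cv cv' => [/(_ 0%N isT) [] -> _] [/(_ 0%N isT) [] -> _]; rewrite ?ltxx ?ltr01.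
pose U := normal h m.+1.
have next w : sign_compatible h m.+1 w ->
    w m.+1 = ((0 < dot_normal h m w) != (0 < - U))%:R /\
    (0 < dot_normal h m.+1 w) = (0 < dot_normal h m w).
  move=> cw; have [zo rule] := cw; have [r0 r1] := rule m.+1 (leqnn _).
  rewrite dot_normalS; apply: next_entry_sign (zo _ (leqnn _)) _ _ _.
  - by move=> w0; have := r0 w0; rewrite dot_normalS w0 mulr0 addr0.
  - by move=> w1; have := r1 w1; rewrite dot_normalS w1 mulr1.
  move=> sgn; rewrite -dot_normal_col; apply: eq_dot_normal.
  apply: IH (ltnW mK) _ _ (sign_compatibleW cw) (cols _ mK) _ => //.
  by rewrite dot_normal_col.
have [v_last v_sign] := next v cv; have [v'_last v'_sign] := next v' cv'.
have agree : forall r, (r <= m)%N -> v r = v' r.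
  apply: IH (ltnW mK) _ _ (sign_compatibleW cv) (sign_compatibleW cv') _.
  by rewrite -v_sign -v'_sign.
rewrite leq_eqVlt ltnS => /orP[/eqP->|]; last exact: agree.
by rewrite v_last v'_last (eq_dot_normal h agree).
Qed.

End FacetProjection.

Section AcuteGram.
Variable R : realFieldType.

Definition acute_gram p (G : 'M[R]_p) :=
  G \in unitmx /\ (forall i j, i != j -> invmx G i j < 0) /\
  (forall i, 0 < \sum_(j < p) invmx G i j).

Definition principal_submx p (G : 'M[R]_p.+1) : 'M[R]_p :=
  \matrix_(i, j) G (widen_ord (leqnSn p) i) (widen_ord (leqnSn p) j).

Lemma acute_gram_diag_gt0 p (G : 'M[R]_p) i : acute_gram G -> 0 < invmx G i i.
Proof.
case=> _ [off rows]; have := rows i; rewrite (bigD1 i) //= => /lt_le_trans; apply.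
by rewrite gerDl sumr_le0 // => j ji; rewrite ltW // off // eq_sym.
Qed.

Lemma widen_ord_eq n m (le_nm : (n <= m)%N) (i j : 'I_n) :
  (widen_ord le_nm i == widen_ord le_nm j) = (i == j).
Proof. by rewrite -val_eqE. Qed.

Lemma widen_ord_neq_max p (i : 'I_p) : widen_ord (leqnSn p) i != ord_max.
Proof. by rewrite -(inj_eq val_inj) /= neq_ltn ltn_ord. Qed.

Lemma invmx_principal_submx p (G : 'M[R]_p.+1) :
  G \in unitmx -> invmx G ord_max ord_max != 0 ->
  let N := invmx G in let w := widen_ord (leqnSn p) in
  principal_submx G \in unitmx /\
  invmx (principal_submx G) =
    \matrix_(i, j) (N (w i) (w j) - N (w i) ord_max * N ord_max (w j) / N ord_max ord_max).
Proof.
move=> Gu Nqq N w; set K := \matrix_(i, j) _.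
have NG a b : \sum_(l < p) N a (w l) * G (w l) b = (a == b)%:R - N a ord_max * G ord_max b.
  have := congr1 (fun M : 'M[R]_p.+1 => M a b) (mulVmx Gu).
  by rewrite !mxE big_ord_recr /= => <-; rewrite addrK.
have KG : K *m principal_submx G = 1%:M.
  apply/matrixP => i j; rewrite !mxE.
  transitivity (\sum_(l < p) N (w i) (w l) * G (w l) (w j)
     - N (w i) ord_max / N ord_max ord_max * \sum_(l < p) N ord_max (w l) * G (w l) (w j)).
    rewrite mulr_sumr -sumrB; apply: eq_bigr => l _; rewrite !mxE mulrBl.
    by congr (_ - _); rewrite -!mulrA (mulrCA (N ord_max _)).
  rewrite !NG /w (eq_sym ord_max) (negPf (widen_ord_neq_max _)).
  by rewrite sub0r mulrN opprK mulrA divfK // subrK widen_ord_eq.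
have [Ku Gu'] := mulmx1_unit KG; split=> //.
by rewrite -[invmx _]mul1mx -KG -mulmxA mulmxV ?mulmx1.
Qed.

Lemma acute_gram_principal_submx p (G : 'M[R]_p.+1) :
  acute_gram G -> acute_gram (principal_submx G).
Proof.
move=> acG; have Nqq := acute_gram_diag_gt0 ord_max acG; case: acG => Gu [off rows].
have [G'u invE] := invmx_principal_submx Gu (lt0r_neq0 Nqq); rewrite /acute_gram invE.
set N := invmx G in off rows Nqq *; set w := widen_ord (leqnSn p).
have off_max i : N (w i) ord_max < 0 /\ N ord_max (w i) < 0.
  by split; apply: off; rewrite ?widen_ord_neq_max // eq_sym widen_ord_neq_max.
split=> //; split=> [i j ij|i]; rewrite ?mxE.
  have [/ltW Niq _] := off_max i; have [_ Nqj] := off_max j.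
  rewrite subr_lt0 (lt_le_trans (off _ _ _)) ?widen_ord_eq //.
  by apply: divr_ge0; [exact: mulr_le0 Niq (ltW Nqj) | exact: ltW].
pose t := N (w i) ord_max / N ord_max ord_max.
have t_lt0 : t < 0 by rewrite pmulr_llt0 ?invr_gt0 //; case: (off_max i).
have tNqq : t * N ord_max ord_max = N (w i) ord_max by rewrite divfK ?lt0r_neq0.
rewrite (eq_bigr (fun j => N (w i) (w j) - t * N ord_max (w j))) => [|j _]; last first.
  by rewrite mxE mulrAC.
rewrite sumrB -mulr_sumr; have := rows (w i); have := rows ord_max.
rewrite !big_ord_recr /=; nra.
Qed.

(* Matrices are read as functions on nat x nat, vanishing outside their range,
   so that all leading blocks of a Hessenberg matrix share one entry function. *)
Definition mx_entry m n (A : 'M[R]_(m, n)) (r c : nat) : R :=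
  if insub r is Some i then (if insub c is Some j then A i j else 0) else 0.

Lemma mx_entryE m n (A : 'M[R]_(m, n)) (i : 'I_m) (j : 'I_n) : mx_entry A i j = A i j.
Proof. by rewrite /mx_entry !valK. Qed.

(* The witness is the last row of the inverse Gram matrix, scaled by -1 over its diagonal
   entry: that row, applied to the columns of P, is orthogonal to all but the last one. *)
Lemma acute_gram_last_col_projects m (P : 'M[R]_(m.+2, m.+1)) :
  acute_gram (P^T *m P) ->
  (forall j : 'I_m, P ord_max (widen_ord (leqnSn m) j) = 0) ->
  projects_into_facet (mx_entry P) m (fun r => mx_entry P r m).
Proof.
move=> acG last0; have Nqq := acute_gram_diag_gt0 ord_max acG.
case: acG => Gu [off rows]; set G := P^T *m P in Gu off rows Nqq.
set N := invmx G in off rows Nqq.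
pose w := widen_ord (leqnSn m); pose q : 'I_m.+1 := ord_max.
have Nq (i : 'I_m) : mx_entry N m i = N q (w i) by rewrite -mx_entryE.
exists (fun i => - mx_entry N m i / N q q); split.
- move=> i im; rewrite (Nq (Ordinal im)) divr_gt0 // oppr_gt0 off //.
  by rewrite eq_sym widen_ord_neq_max.
- rewrite -mulr_suml sumrN ltr_pdivrMr // mul1r (eq_bigr _ (fun i _ => Nq i)).
  by have := rows q; rewrite big_ord_recr /= => ?; rewrite -subr_gt0 opprK addrC.
move=> j jm; pose l := w (Ordinal jm).
have orth : \sum_(r < m.+2) P r l * (\sum_(k < m.+1) N q k * P r k) = 0.
  have NGql : (N *m G) q l = 0.
    by rewrite mulVmx // mxE eq_sym (negPf (widen_ord_neq_max _)).
  rewrite -[RHS]NGql mxE; under [RHS]eq_bigr do rewrite mxE mulr_sumr.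
  rewrite exchange_big /=; apply: eq_bigr => r _; rewrite mulr_sumr.
  by apply: eq_bigr => k _; rewrite mxE mulrCA (mulrC (P r l)).
move: orth; rewrite big_ord_recr /= last0 mul0r addr0 => orth.
apply/eqP; rewrite -(mulrI_eq0 _ (lregP (lt0r_neq0 Nqq))); apply/eqP.
rewrite -[RHS]orth mulr_sumr; apply: eq_bigr => r _.
rewrite mulrCA mulrBr mulr_sumr.
rewrite (eq_bigr (fun i : 'I_m => - (N q (w i) * mx_entry P r i))) => [|i _]; last first.
  by rewrite Nq; field; exact: lt0r_neq0.
rewrite sumrN opprK big_ord_recr /= -!mx_entryE /= addrC.
by congr (_ * (_ + _)); apply: eq_bigr => i _; rewrite -!mx_entryE.
Qed.

End AcuteGram.

Section LeadingBlocks.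
Variable R : realFieldType.
Implicit Types (h : nat -> nat -> R) (v : nat -> R).

Definition lead_block h m : 'M[R]_(m.+1, m) := \matrix_(a, b) h a b.

Lemma gram_lead_blockS h m : hessenberg_fun h ->
  (lead_block h m)^T *m lead_block h m =
  principal_submx ((lead_block h m.+1)^T *m lead_block h m.+1).
Proof.
move=> hh; apply/matrixP => i j; rewrite !mxE [RHS]big_ord_recr /= !mxE.
rewrite [h m.+1 i]hh ?mul0r ?addr0 //=; last by rewrite ltnS ltn_ord.
by apply: eq_bigr => r _; rewrite !mxE.
Qed.

Lemma acute_lead_block_le h K : hessenberg_fun h ->
  acute_gram ((lead_block h K)^T *m lead_block h K) ->
  forall m, (m <= K)%N -> acute_gram ((lead_block h m)^T *m lead_block h m).
Proof.
move=> hh acK; apply: leq_down_ind => // m _ acS.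
by rewrite gram_lead_blockS //; exact: acute_gram_principal_submx.
Qed.

Lemma lead_block_col_projects h m : hessenberg_fun h ->
  acute_gram ((lead_block h m.+1)^T *m lead_block h m.+1) ->
  projects_into_facet h m (fun r => h r m).
Proof.
move=> hh acS.
have last0 (j : 'I_m) : lead_block h m.+1 ord_max (widen_ord (leqnSn m) j) = 0.
  by rewrite mxE hh //= ltnS.
have entry r i : (r < m.+2)%N -> (i < m.+1)%N -> mx_entry (lead_block h m.+1) r i = h r i.
  by move=> rm im; rewrite (mx_entryE _ (Ordinal rm) (Ordinal im)) mxE.
apply: projects_into_facet_ext (acute_gram_last_col_projects acS last0).
  by move=> r i rm im; rewrite (entry r i (leqW rm) (ltnW im)).
by move=> r rm; rewrite (entry r m (leqW rm)).
Qed.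

Lemma zero_one_projections_unique h K : hessenberg_fun h -> unit_subdiag h K ->
  (forall r c, h r c = 0 \/ h r c = 1) ->
  acute_gram ((lead_block h K)^T *m lead_block h K) ->
  forall v v', (forall r, (r <= K)%N -> v r = 0 \/ v r = 1) ->
  (forall r, (r <= K)%N -> v' r = 0 \/ v' r = 1) ->
  projects_into_facet h K v -> projects_into_facet h K v' ->
  (0 < dot_normal h K v) = (0 < dot_normal h K v') ->
  forall r, (r <= K)%N -> v r = v' r.
Proof.
move=> hh s1 h01 acK v v' v01 v'01 vK v'K.
have cols m : (m < K)%N -> projects_into_facet h m (fun r => h r m).
  by move=> mK; apply: lead_block_col_projects hh (acute_lead_block_le hh acK mK).
apply: (sign_compatible_unique (K := K)) => //.
- move=> m mK; apply: projects_into_facet_sign_compatible hh _ _ _ (cols m mK) => //.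
  + by move=> j jm; apply: s1; exact: ltn_trans jm mK.
  + by move=> m' m'm; apply: cols; exact: ltn_trans m'm mK.
- exact: projects_into_facet_sign_compatible.
- exact: projects_into_facet_sign_compatible.
Qed.

End LeadingBlocks.

Lemma hessenberg_mx_entry m p (A : 'M[rat]_(m, p)) :
  unreduced_hessenberg A -> hessenberg_fun (mx_entry A).
Proof.
case=> A0 _ r j jr; rewrite /mx_entry.
by case: insubP => [a _ Ea|//]; case: insubP => [b _ Eb|//]; apply: A0; rewrite Ea Eb.
Qed.

Lemma zero_one_mx_entry m p (A : 'M[rat]_(m, p)) :
  zero_one_mx A -> forall r c, mx_entry A r c = 0 \/ mx_entry A r c = 1.
Proof.
move=> A01 r c; rewrite /mx_entry.
by case: insubP => [a _ _|]; [case: insubP => [b _ _|]; [exact: A01|left]|left].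
Qed.

Lemma unreduced_hessenberg_subdiag m p (A : 'M[rat]_(m, p)) (i : 'I_m) (j : 'I_p) :
  unreduced_hessenberg A -> zero_one_mx A -> nat_of_ord i = j.+1 -> A i j = 1.
Proof. by case=> _ A_sub A01 ij; case: (A01 i j) (A_sub i j ij) => ->; rewrite ?eqxx. Qed.

Lemma unit_subdiag_mx_entry p (A : 'M[rat]_(p.+1, p)) :
  unreduced_hessenberg A -> zero_one_mx A -> unit_subdiag (mx_entry A) p.
Proof.
move=> hA A01 j jp; have j1p : (j.+1 < p.+1)%N by [].
by rewrite (mx_entryE _ (Ordinal j1p) (Ordinal jp)) (unreduced_hessenberg_subdiag hA A01).
Qed.

Lemma lead_block_mx_entry p (A : 'M[rat]_(p.+1, p)) : lead_block (mx_entry A) p = A.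
Proof. by apply/matrixP => i j; rewrite mxE mx_entryE. Qed.

Lemma good_ext_last_col_projects k (H : 'M[rat]_(k.+1, k)) A : good_ext H A ->
  projects_into_facet (mx_entry H) k (fun r => mx_entry A r k).
Proof.
case=> -[A0 _] [_ [acA <-]].
have last0 (j : 'I_k) : A ord_max (widen_ord (leqnSn k) j) = 0 by rewrite A0 //= ltnS.
apply: projects_into_facet_ext (acute_gram_last_col_projects acA last0) => // r i rk ik.
rewrite (mx_entryE _ (Ordinal (rk : (r < k.+1)%N)) (Ordinal ik)) mxE.
by rewrite -(mx_entryE A (widen_ord _ _) (widen_ord _ _)).
Qed.

Lemma good_ext_eq k (H : 'M[rat]_(k.+1, k)) A B : good_ext H A -> good_ext H B ->
  (forall r, (r <= k)%N -> mx_entry A r k = mx_entry B r k) -> A = B.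
Proof.
move=> [hA [A01 [_ tlA]]] [hB [B01 [_ tlB]]] last_col; apply/matrixP => i j.
case: (ltnP j k) => [jk|kj].
  have -> : j = widen_ord (leqnSn k) (Ordinal jk) by apply: val_inj.
  case: (ltnP i k.+1) => [ik|ki].
    have -> : i = widen_ord (leqnSn k.+1) (Ordinal ik) by apply: val_inj.
    by transitivity (H (Ordinal ik) (Ordinal jk)); [rewrite -tlA | rewrite -tlB]; rewrite mxE.
  by rewrite hA.1 ?hB.1 //= (leq_trans _ ki).
have jE : j = ord_max by apply: val_inj; apply/eqP; rewrite eqn_leq kj -ltnS ltn_ord.
case: (ltnP i k.+1) => [ik|ki].
  by have := last_col i ik; rewrite jE -!(mx_entryE _ i ord_max).
have ij : nat_of_ord i = j.+1 by rewrite jE; apply/eqP; rewrite eqn_leq ki -ltnS ltn_ord.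
by rewrite !(unreduced_hessenberg_subdiag _ _ ij).
Qed.

Theorem lemma6p6 (k : nat) (H : 'M[rat]_(k.+1, k)) :
  unreduced_hessenberg H -> zero_one_mx H -> acute_simplex H ->
  forall A1 A2 A3 : 'M[rat]_(k.+2, k.+1),
    good_ext H A1 -> good_ext H A2 -> good_ext H A3 ->
    A1 = A2 \/ A1 = A3 \/ A2 = A3.
Proof.
move=> hH H01 acH A1 A2 A3 e1 e2 e3.
pose sgn (A : 'M[rat]_(k.+2, k.+1)) := 0 < dot_normal (mx_entry H) k (fun r => mx_entry A r k).
have uniq A B : good_ext H A -> good_ext H B -> sgn A = sgn B -> A = B.
  move=> eA eB same; apply: (good_ext_eq eA eB).
  apply: (zero_one_projections_unique (hessenberg_mx_entry hH)
    (unit_subdiag_mx_entry hH H01) (zero_one_mx_entry H01)) => //.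
  - by rewrite lead_block_mx_entry.
  - by move=> r _; apply: zero_one_mx_entry; case: eA => _ [].
  - by move=> r _; apply: zero_one_mx_entry; case: eB => _ [].
  - exact: good_ext_last_col_projects.
  - exact: good_ext_last_col_projects.
have [E|[E|E]] : sgn A1 = sgn A2 \/ sgn A1 = sgn A3 \/ sgn A2 = sgn A3.
  by case: (sgn A1) (sgn A2) (sgn A3) => [] [] [];
    first [by left | by right; left | by right; right].
- by left; exact: uniq.
- by right; left; exact: uniq.
- by right; right; exact: uniq.
Qed.
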